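(* For all integers $m\ge1$ and $r\ge0$: (i) for all $n,k\ge0$, $W_{m,r}(n+1,k+1)=\sum_{j\ge0}\frac{n+1}{k+1}\binom{k+j}{j}c_j\,m^j\,W_{m,r}(n,k+j)$ (a finite sum since $W_{m,r}(n,i)=0$ for $i>n$); (ii) for all $n\ge1$ and $1\le k\le n$, $W_{m,r}(n,k)-rW_{m,r}(n-1,k)=\sum_{l=k}^n\binom{n-1}{l-1}m^{n-l}W_{m,r}(l-1,k-1)$; (iii) for all $n\ge1$ and $1\le k\le n$, $k\,W_{m,r}(n,k)=\sum_{l=k}^n\binom{n}{l-1}m^{n-l}W_{m,r}(l-1,k-1)$.
   Context: For integers $m\ge1$, $n,k,r\ge0$, $W_{m,r}(n,k)$ denotes the $r$-Whitney number of the second kind, defined by $\sum_{n\ge k}W_{m,r}(n,k)\frac{z^n}{n!}=\frac{e^{rz}}{k!}\left(\frac{e^{mz}-1}{m}\right)^k$ (and $W_{m,r}(n,k)=0$ for $k>n$). The Cauchy numbers of the first kind are $c_n=\int_0^1x(x-1)\cdots(x-n+1)\,dx$, equivalently $\frac{t}{\ln(1+t)}=\sum_{n\ge0}c_n\frac{t^n}{n!}$. *)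

From HB Require Import structures.
From mathcomp Require Import all_boot all_order all_algebra.
Set Implicit Arguments. Unset Strict Implicit. Unset Printing Implicit Defensive.
Import Order.TTheory GRing.Theory Num.Theory.
Local Open Scope ring_scope.

Definition expTrunc (r N : nat) : {poly rat} :=
  \sum_(i < N.+1) ((r%:R ^+ i) / (i`!)%:R) *: 'X^i.

(* Truncation (up to degree N) of (e^{m z} - 1)/m = sum_{i>=1} m^{i-1} z^i / i!. *)
Definition expm1Trunc (m N : nat) : {poly rat} :=
  \sum_(1 <= i < N.+1) ((m%:R ^+ i.-1) / (i`!)%:R) *: 'X^i.

(* r-Whitney numbers of the second kind, defined through the exponential
   generating function  sum_n W(n,k) z^n/n! = e^{rz}/k! ((e^{mz}-1)/m)^k :
   W(n,k) = n!/k! * [z^n] (e^{rz} ((e^{mz}-1)/m)^k).  Truncating the series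
   at degree n does not change the coefficient of z^n. *)
Definition Whitney (m r n k : nat) : rat :=
  (n`!)%:R / (k`!)%:R * (expTrunc r n * expm1Trunc m n ^+ k)`_n.

(* Cauchy numbers of the first kind: c_n = int_0^1 x(x-1)...(x-n+1) dx,
   computed as the integral over [0,1] of the polynomial. *)
Definition fallpoly (n : nat) : {poly rat} := \prod_(j < n) ('X - (j%:R)%:P).

Definition cauchy (n : nat) : rat :=
  \sum_(i < size (fallpoly n)) (fallpoly n)`_i / (i.+1)%:R.

(* Everything is read off the exponential generating functions E = e^{rz} and
   F = (e^{mz} - 1)/m, truncated to polynomials over Q, so that
   W(n,k) = n!/k! [z^n] E F^k.  Peeling one factor F = sum_i m^{i-1} z^i/i! off
   F^k gives (iii).  Differentiating E F^{k+1} with E' = r E and F' = 1 + m F gives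
   the triangular recurrence W(n+1,k+1) = W(n,k) + (m(k+1) + r) W(n,k+1), which
   together with (iii) gives (ii).  For (i), write F = z H with H = (e^{mz}-1)/(mz);
   since ln(1 + mF) = mz, substituting t = mF in t/ln(1+t) = sum_j c_j t^j/j!
   gives H = sum_j c_j m^j F^j/j!.  This is proved coefficientwise: the
   polynomial sum_j [z^i](mF)^j x(x-1)...(x-j+1)/j! has degree at most n and
   equals [z^i](1 + mF)^x = (mx)^i/i! at x = 0, ..., n, hence everywhere, and
   integrating it over [0, 1] turns the falling factorials into the c_j. *)

From HB Require Import structures.
From mathcomp Require Import all_boot all_order all_algebra zify ring.
Import Order.TTheory GRing.Theory Num.Theory.

Local Open Scope ring_scope.

Section TruncatedEquality.
Context {R : nzSemiRingType}.
Implicit Types p q : {poly R}.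

Definition eq_upto N p q := forall i, (i <= N)%N -> p`_i = q`_i.

Lemma eq_upto_refl N p : eq_upto N p p.
Proof. by []. Qed.

Lemma eq_upto_sym [N p q] : eq_upto N p q -> eq_upto N q p.
Proof. by move=> e i le_iN; rewrite e. Qed.

Lemma eq_upto_trans [N p q s] : eq_upto N p q -> eq_upto N q s -> eq_upto N p s.
Proof. by move=> e1 e2 i le_iN; rewrite e1 ?e2. Qed.

Lemma eq_uptoD [N p p' q q'] :
  eq_upto N p p' -> eq_upto N q q' -> eq_upto N (p + q) (p' + q').
Proof. by move=> ep eq i le_iN; rewrite !coefD ep ?eq. Qed.

Lemma eq_uptoMn [N p q] k : eq_upto N p q -> eq_upto N (p *+ k) (q *+ k).
Proof. by move=> e i le_iN; rewrite !coefMn e. Qed.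

Lemma eq_uptoM [N p p' q q'] :
  eq_upto N p p' -> eq_upto N q q' -> eq_upto N (p * q) (p' * q').
Proof.
move=> ep eq i le_iN; rewrite !coefM; apply: eq_bigr => j _.
have le_jN : (j <= N)%N by rewrite (leq_trans _ le_iN) // -ltnS.
by rewrite ep // eq // (leq_trans (leq_subr _ _) le_iN).
Qed.

Lemma eq_uptoX [N p q] k : eq_upto N p q -> eq_upto N (p ^+ k) (q ^+ k).
Proof.
move=> e; elim: k => [|k IHk]; first exact: eq_upto_refl.
by rewrite !exprS; apply: eq_uptoM.
Qed.

Lemma coef_expr_small p k i : p`_0 = 0 -> (i < k)%N -> (p ^+ k)`_i = 0.
Proof.
move=> p0; elim: k i => [//|k IHk] i lt_ik.
rewrite exprS coefM big1 // => -[[|j] /= lt_ji] _; first by rewrite p0 mul0r.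
by rewrite IHk ?mulr0 //; lia.
Qed.

End TruncatedEquality.

Lemma big_nat_shift1 {V : nmodType} [k n] [F : nat -> V] : (k <= n)%N ->
  (forall j, (j < k)%N -> F j.+1 = 0) ->
  \sum_(k.+1 <= l < n.+1) F l = \sum_(j < n) F j.+1.
Proof.
move=> le_kn F0; rewrite big_add1 succnK -(big_mkord xpredT (fun j => F j.+1)).
rewrite (big_cat_nat _ (n := k) (m := 0)) //= [X in X + _]big1_seq ?add0r //.
by move=> j /andP[_]; rewrite mem_iota add0n subn0 => /andP[_ /F0].
Qed.

Section TruncatedExponential.
Context {R : numFieldType}.
Implicit Types a b : R.

Lemma natr_fact_neq0 n : (n`!)%:R != 0 :> R.
Proof. by rewrite pnatr_eq0 -lt0n fact_gt0. Qed.

Lemma natrS_neq0 n : (n.+1)%:R != 0 :> R.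
Proof. by rewrite pnatr_eq0. Qed.

Lemma natr_bin n j : (j <= n)%N ->
  ('C(n, j))%:R = (n`!)%:R / ((j`!)%:R * ((n - j)`!)%:R) :> R.
Proof.
move=> le_jn; rewrite -(bin_fact le_jn) !natrM mulfK //.
by rewrite mulf_neq0 // natr_fact_neq0.
Qed.

Definition expT a N : {poly R} := \poly_(i < N.+1) (a ^+ i / (i`!)%:R).

Lemma coef_expT a N i :
  (expT a N)`_i = if (i <= N)%N then a ^+ i / (i`!)%:R else 0.
Proof. by rewrite coef_poly ltnS. Qed.

Lemma expT_le a N M : (M <= N)%N -> eq_upto M (expT a N) (expT a M).
Proof. by move=> le_MN i le_iM; rewrite !coef_expT le_iM (leq_trans le_iM). Qed.

Lemma expT0 N : eq_upto N (expT 0 N) 1.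
Proof. by move=> [|i] le_iN; rewrite coef_expT le_iN coef1 ?divr1 // expr0n mul0r. Qed.

Lemma expTD a b N : eq_upto N (expT a N * expT b N) (expT (a + b) N).
Proof.
move=> i le_iN; rewrite coefM coef_expT le_iN addrC exprDn mulr_suml.
apply: eq_bigr => -[j /= lt_ji] _; have le_ji : (j <= i)%N by [].
rewrite !coef_expT (leq_trans le_ji le_iN) (leq_trans (leq_subr _ _) le_iN).
rewrite -(mulr_natr _ 'C(i, j)) natr_bin //.
by field; rewrite !natr_fact_neq0.
Qed.

Lemma expTX a N t : eq_upto N (expT a N ^+ t) (expT (a *+ t) N).
Proof.
elim: t => [|t IHt]; first by rewrite expr0 mulr0n; apply/eq_upto_sym/expT0.
rewrite exprS mulrS; apply: eq_upto_trans (expTD a (a *+ t) N).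
exact/eq_uptoM/IHt/eq_upto_refl.
Qed.

Lemma deriv_expT a N : eq_upto N (expT a N.+1)^`() (a *: expT a N.+1).
Proof.
move=> i le_iN; rewrite coef_deriv coefZ !coef_expT ltnS le_iN (leq_trans le_iN) //.
rewrite factS natrM exprS -mulr_natr.
by field; rewrite nat1r natr_fact_neq0 natrS_neq0.
Qed.

End TruncatedExponential.

Section WhitneyNumbers.
Variables m r : nat.

Lemma expTruncE N : expTrunc r N = expT (r%:R : rat) N.
Proof. by rewrite /expT poly_def. Qed.

Lemma coef_expm1Trunc N i :
  (expm1Trunc m N)`_i = if (0 < i <= N)%N then m%:R ^+ i.-1 / (i`!)%:R else 0.
Proof.
rewrite /expm1Trunc coef_sum.
under eq_bigr => j _ do rewrite coefZ coefXn mulr_natr mulrb eq_sym.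
by rewrite -big_mkcond big_nat1_eq ltnS.
Qed.

Lemma expm1Trunc_le N M : (M <= N)%N -> eq_upto M (expm1Trunc m N) (expm1Trunc m M).
Proof.
move=> le_MN i le_iM; rewrite !coef_expm1Trunc le_iM (leq_trans le_iM le_MN).
by case: i le_iM.
Qed.

Lemma deriv_expm1Trunc N :
  eq_upto N (expm1Trunc m N.+1)^`() (1 + m%:R *: expm1Trunc m N.+1).
Proof.
move=> [|i] le_iN; rewrite coef_deriv coefD coefZ coef1 !coef_expm1Trunc /=.
  by rewrite mulr0 addr0 divr1.
rewrite ltnS le_iN (ltn_trans _ (ltnSn N)) ?ltnS // add0r factS natrM exprS -mulr_natr.
by field; rewrite -natrD natr_fact_neq0 natrS_neq0.
Qed.

Definition whitneyGF N k := expTrunc r N * expm1Trunc m N ^+ k.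

Lemma whitneyGF_le [N M] k : (M <= N)%N -> eq_upto M (whitneyGF N k) (whitneyGF M k).
Proof.
move=> le_MN; rewrite /whitneyGF !expTruncE.
by apply: eq_uptoM; [apply: expT_le | apply/eq_uptoX/expm1Trunc_le].
Qed.

Lemma WhitneyE [N n] k : (n <= N)%N ->
  Whitney m r n k = (n`!)%:R / (k`!)%:R * (whitneyGF N k)`_n.
Proof. by move=> le_nN; rewrite (whitneyGF_le k le_nN). Qed.

Lemma Whitney_small n k : (n < k)%N -> Whitney m r n k = 0.
Proof.
move=> lt_nk; rewrite (WhitneyE k (ltnW lt_nk)) /whitneyGF coefM big1 ?mulr0 // => j _.
by rewrite coef_expr_small ?mulr0 // ?coef_expm1Trunc // (leq_ltn_trans (leq_subr _ _)).
Qed.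

Lemma Whitney_split n k : (k.+1)%:R * Whitney m r n k.+1 =
  \sum_(j < n) ('C(n, j))%:R * m%:R ^+ (n - j.+1) * Whitney m r j k.
Proof.
case: n => [|n]; first by rewrite Whitney_small // mulr0 big_ord0.
rewrite (WhitneyE _ (leqnn n.+1)) /whitneyGF exprSr (mulrA (expTrunc _ _)) coefM big_ord_recr /=.
rewrite subnn coef_expm1Trunc /= mulr0 addr0 mulrA mulr_sumr.
apply: eq_bigr => -[j /= lt_jn] _; have le_jn : (j <= n.+1)%N by apply: ltnW.
rewrite (WhitneyE _ le_jn) coef_expm1Trunc natr_bin //.
have -> : (0 < n.+1 - j <= n.+1)%N by lia.
rewrite (factS k) natrM subnS.
by field; rewrite nat1r !natr_fact_neq0 natrS_neq0.
Qed.

(* Differentiate e^{rz} F^{k+1}, using E' = r E and F' = 1 + m F. *)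
Lemma WhitneyS n k : Whitney m r n.+1 k.+1 =
  Whitney m r n k + (m%:R * (k.+1)%:R + r%:R) * Whitney m r n k.+1.
Proof.
set E := expTrunc r n.+1; set F := expm1Trunc m n.+1.
have dGF : eq_upto n (whitneyGF n.+1 k.+1)^`()
   (r%:R *: whitneyGF n.+1 k.+1
    + (whitneyGF n.+1 k + m%:R *: whitneyGF n.+1 k.+1) *+ k.+1).
  rewrite /whitneyGF -/E -/F derivM deriv_exp /=.
  apply: (@eq_upto_trans _ _ _
    (r%:R *: E * F ^+ k.+1 + E * ((1 + m%:R *: F) * F ^+ k *+ k.+1))).
    apply: eq_uptoD; first by apply: eq_uptoM; [rewrite /E expTruncE; apply: deriv_expT |].
    by apply/eq_uptoM/eq_uptoMn/eq_uptoM => //; apply: deriv_expm1Trunc.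
  have -> : r%:R *: E * F ^+ k.+1 + E * ((1 + m%:R *: F) * F ^+ k *+ k.+1) =
    r%:R *: (E * F ^+ k.+1) + (E * F ^+ k + m%:R *: (E * F ^+ k.+1)) *+ k.+1.
    by rewrite mulrnAr -scalerAl -!mul_polyC !exprS; ring.
  exact: eq_upto_refl.
have := dGF n (leqnn n).
rewrite coef_deriv coefD coefZ coefMn coefD coefZ.
rewrite (WhitneyE _ (leqnn n.+1)) !(WhitneyE _ (leqnSn n)).
set a := _`_n.+1; set b := _`_n; set c := _`_n => dGFn.
have -> : a = (r%:R * b + (c + m%:R * b) * (k.+1)%:R) / (n.+1)%:R.
  by rewrite !mulr_natr -dGFn -(mulr_natr a) mulfK // natrS_neq0.
rewrite factS (factS k) !natrM.
by field; rewrite !nat1r !natrS_neq0 !natr_fact_neq0.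
Qed.

End WhitneyNumbers.

Lemma poly_natr_roots_eq0 (R : numDomainType) n (p : {poly R}) :
  (size p <= n.+1)%N -> (forall t, (t <= n)%N -> p.[t%:R] = 0) -> p = 0.
Proof.
move=> size_p p_t0; apply/eqP; apply: contraT => p_neq0.
have roots : all (root p) [seq t%:R | t <- iota 0 n.+1].
  by apply/allP => x /mapP[t]; rewrite mem_iota ltnS => /andP[_ /p_t0 pt0] ->; apply/rootP.
have uniq_nat : uniq [seq t%:R : R | t <- iota 0 n.+1].
  by rewrite map_inj_uniq ?iota_uniq // => x y /eqP; rewrite eqr_nat => /eqP.
have := max_poly_roots p_neq0 roots uniq_nat.
by rewrite size_map size_iota ltnNge size_p.
Qed.

Section IntegralOnUnitInterval.
Context {R : fieldType}.
Implicit Types p q : {poly R}.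

Definition integral01 p := \sum_(i < size p) p`_i / (i.+1)%:R.

Lemma integral01E M p : (size p <= M)%N -> integral01 p = \sum_(i < M) p`_i / (i.+1)%:R.
Proof.
move=> size_p; rewrite /integral01 (big_ord_widen _ (fun i => p`_i / (i.+1)%:R) size_p).
rewrite big_mkcond; apply: eq_bigr => i _; case: ltnP => // le_p_i.
by rewrite nth_default ?mul0r.
Qed.

Lemma integral01D p q : integral01 (p + q) = integral01 p + integral01 q.
Proof.
rewrite !(integral01E (maxn (size p) (size q))) ?leq_maxl ?leq_maxr ?size_polyD //.
by rewrite -big_split; apply: eq_bigr => i _; rewrite coefD mulrDl.
Qed.

Lemma integral01Z c p : integral01 (c *: p) = c * integral01 p.
Proof.
rewrite !(integral01E (size p)) ?size_scale_leq // mulr_sumr.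
by apply: eq_bigr => i _; rewrite coefZ mulrA.
Qed.

Lemma integral01_sum I (s : seq I) (P : pred I) (F : I -> {poly R}) :
  integral01 (\sum_(i <- s | P i) F i) = \sum_(i <- s | P i) integral01 (F i).
Proof.
have integral01_0 : integral01 0 = 0 by rewrite /integral01 size_poly0 big_ord0.
exact: (big_morph _ integral01D integral01_0).
Qed.

Lemma integral01_scaleXn c i : integral01 (c *: 'X^i) = c / (i.+1)%:R.
Proof.
rewrite (integral01E i.+1) ?(leq_trans (size_scale_leq _ _)) ?size_polyXn //.
rewrite big_ord_recr /= big1 ?add0r => [|j _]; rewrite coefZ coefXn ?eqxx ?mulr1 //.
by rewrite ltn_eqF ?mulr0 ?mul0r.
Qed.

End IntegralOnUnitInterval.

Lemma size_fallpoly j : (size (fallpoly j) <= j.+1)%N.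
Proof.
elim: j => [|j IHj]; first by rewrite /fallpoly big_ord0 size_poly1.
rewrite /fallpoly big_ord_recr /= -/(fallpoly j).
by rewrite (leq_trans (size_polyMleq _ _)) // size_XsubC addn2.
Qed.

Lemma horner_fallpoly j t : (fallpoly j).[t%:R] = (t ^_ j)%:R.
Proof.
elim: j => [|j IHj]; first by rewrite /fallpoly big_ord0 hornerC ffactn0.
rewrite /fallpoly big_ord_recr /= -/(fallpoly j) hornerM hornerXsubC IHj ffactnSr natrM.
by case: (leqP j t) => [/natrB -> // | lt_tj]; rewrite ffact_small // !mul0r.
Qed.

Section CauchySeries.
Variable m : nat.

Lemma expm1Trunc_expT N :
  eq_upto N (m%:R *: expm1Trunc m N + 1) (expT (m%:R : rat) N).
Proof.
move=> [|i] le_iN; rewrite coefD coefZ coef1 coef_expm1Trunc coef_expT le_iN /=.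
  by rewrite mulr0 add0r expr0 divr1.
by rewrite addr0 exprS mulrA.
Qed.

(* [(1 + m F)^t = e^{m t z}] *)
Lemma sum_bin_expm1Trunc n t i : (t <= n)%N -> (i <= n.+1)%N ->
  \sum_(j < n.+1) ('C(t, j))%:R * ((m%:R *: expm1Trunc m n.+1) ^+ j)`_i
  = (m%:R * t%:R) ^+ i / (i`!)%:R.
Proof.
move=> le_tn le_in; set Y := m%:R *: expm1Trunc m n.+1.
transitivity (\sum_(j < t.+1) ('C(t, j))%:R * (Y ^+ j)`_i).
  rewrite (big_ord_widen _ (fun j => ('C(t, j))%:R * (Y ^+ j)`_i) (_ : t.+1 <= n.+1)%N) //.
  rewrite [RHS]big_mkcond; apply: eq_bigr => j _; case: ltnP => // le_tj.
  by rewrite bin_small ?mul0r.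
under eq_bigr => j _ do rewrite mulr_natl -coefMn.
rewrite -coef_sum -exprD1n (eq_uptoX t (expm1Trunc_expT n.+1) _ le_in).
by rewrite (expTX _ _ _ _ le_in) coef_expT le_in mulr_natr.
Qed.

(* Both sides have degree at most n and agree at 0, ..., n by [sum_bin_expm1Trunc]. *)
Lemma sum_fallpoly_expm1Trunc [n i] : (i <= n)%N ->
  \sum_(j < n.+1) (((m%:R *: expm1Trunc m n.+1) ^+ j)`_i / (j`!)%:R) *: fallpoly j
  = (m%:R ^+ i / (i`!)%:R) *: 'X^i.
Proof.
move=> le_in; apply/eqP; rewrite -subr_eq0; apply/eqP/(@poly_natr_roots_eq0 _ n).
  rewrite (leq_trans (size_polyD _ _)) // geq_max size_polyN.
  rewrite (leq_trans (size_scale_leq _ _)) ?size_polyXn ?ltnS // andbT.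
  apply: leq_trans (size_sum _ _ _) _; apply/bigmax_leqP => j _.
  exact: leq_trans (size_scale_leq _ _) (leq_trans (size_fallpoly j) (ltn_ord j)).
move=> t le_tn; rewrite hornerD hornerN horner_sum hornerZ hornerXn.
apply/eqP; rewrite subr_eq0; apply/eqP.
under eq_bigr => j _ do
  rewrite hornerZ horner_fallpoly -bin_ffact natrM mulrCA divfK ?natr_fact_neq0 //.
by rewrite sum_bin_expm1Trunc ?(leq_trans le_in) // exprMn mulrAC.
Qed.

Lemma cauchyE j : cauchy j = integral01 (fallpoly j).
Proof. by []. Qed.

(* [F / z = (e^{mz} - 1) / (mz)] is [t / ln (1 + t)] at [t = m F]. *)
Lemma coef_cauchy_series n i : (i <= n)%N ->
  (\sum_(j < n.+1) (cauchy j * m%:R ^+ j / (j`!)%:R) *: expm1Trunc m n.+1 ^+ j)`_i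
  = m%:R ^+ i / ((i.+1)`!)%:R.
Proof.
move=> le_in; rewrite coef_sum factS natrM invfM mulrA mulrAC.
have := congr1 integral01 (sum_fallpoly_expm1Trunc le_in).
rewrite integral01_sum integral01_scaleXn => <-.
apply: eq_bigr => j _; rewrite integral01Z -cauchyE coefZ exprZn coefZ.
by ring.
Qed.

Lemma coefMS_expm1Trunc n (p : {poly rat}) :
  (p * expm1Trunc m n.+1)`_n.+1 =
  \sum_(l < n.+1) p`_l * (m%:R ^+ (n - l) / ((n - l).+1`!)%:R).
Proof.
rewrite coefM big_ord_recr /= subnn coef_expm1Trunc /= mulr0 addr0.
apply: eq_bigr => -[l /= lt_ln] _.
by rewrite coef_expm1Trunc subSn // /= ltnS leq_subr.
Qed.

End CauchySeries.

Section WhitneyIdentities.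
Variables m r : nat.

Lemma Whitney_cauchy_sum n k : Whitney m r n.+1 k.+1 =
  \sum_(j < n.+1) (n.+1)%:R / (k.+1)%:R * ('C(k + j, j))%:R * cauchy j
    * (m%:R ^+ j) * Whitney m r n (k + j).
Proof.
set F := expm1Trunc m n.+1; set G := whitneyGF m r n.+1 k.
set H := \sum_(j < n.+1) (cauchy j * m%:R ^+ j / (j`!)%:R) *: F ^+ j.
have GFE : (G * F)`_n.+1 = (G * H)`_n.
  rewrite coefMS_expm1Trunc coefM; apply: eq_bigr => l _.
  by rewrite coef_cauchy_series // leq_subr.
have GHE : (G * H)`_n =
    \sum_(j < n.+1) (cauchy j * m%:R ^+ j / (j`!)%:R) * (G * F ^+ j)`_n.
  by rewrite mulr_sumr coef_sum; apply: eq_bigr => j _; rewrite -scalerAr coefZ.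
rewrite (WhitneyE _ _ _ (leqnn n.+1)) /whitneyGF exprSr mulrA -/G -/F GFE GHE.
rewrite mulr_sumr; apply: eq_bigr => j _.
have GFj : whitneyGF m r n.+1 (k + j) = G * F ^+ j by rewrite /whitneyGF exprD mulrA.
rewrite (WhitneyE _ _ _ (leqnSn n)) GFj natr_bin ?leq_addl // addnK !factS !natrM.
move: (_`_n) (cauchy j) => c cj.
by field; rewrite !natr_fact_neq0 nat1r natrS_neq0.
Qed.

Lemma Whitney_subr_sum n k : (1 <= n)%N -> (1 <= k <= n)%N ->
  Whitney m r n k - r%:R * Whitney m r n.-1 k =
  \sum_(k <= l < n.+1) ('C(n.-1, l.-1))%:R * (m%:R ^+ (n - l)) * Whitney m r l.-1 k.-1.
Proof.
case: n => [//|n] _; case: k => [//|k] /= lt_kn.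
rewrite (big_nat_shift1 (ltnW lt_kn)) => [|j lt_jk]; last by rewrite Whitney_small ?mulr0.
rewrite big_ord_recr /= binn subSS subnn expr0 mulr1 mul1r.
rewrite (_ : \sum_(i < n) _ = m%:R * ((k.+1)%:R * Whitney m r n k.+1)).
  by rewrite WhitneyS; ring.
rewrite Whitney_split mulr_sumr; apply: eq_bigr => -[j /= lt_jn] _.
by rewrite subSS -[(n - j)%N]prednK ?subn_gt0 // exprS subnS; ring.
Qed.

Lemma Whitney_natrM_sum n k : (1 <= n)%N -> (1 <= k <= n)%N ->
  k%:R * Whitney m r n k =
  \sum_(k <= l < n.+1) ('C(n, l.-1))%:R * (m%:R ^+ (n - l)) * Whitney m r l.-1 k.-1.
Proof.
move=> _; case: k => [//|k] /= lt_kn.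
rewrite Whitney_split (big_nat_shift1 (ltnW lt_kn)) // => j lt_jk.
by rewrite Whitney_small ?mulr0.
Qed.

End WhitneyIdentities.

Theorem mainTheorem18 (m r : nat) (hm : (1 <= m)%N) :
  (forall n k : nat,
     Whitney m r n.+1 k.+1 =
     \sum_(j < n.+1)
        (n.+1)%:R / (k.+1)%:R * ('C(k + j, j))%:R * cauchy j
          * (m%:R ^+ j) * Whitney m r n (k + j)) /\
  (forall n k : nat, (1 <= n)%N -> (1 <= k <= n)%N ->
     Whitney m r n k - r%:R * Whitney m r n.-1 k =
     \sum_(k <= l < n.+1)
        ('C(n.-1, l.-1))%:R * (m%:R ^+ (n - l)) * Whitney m r l.-1 k.-1) /\
  (forall n k : nat, (1 <= n)%N -> (1 <= k <= n)%N ->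
     k%:R * Whitney m r n k =
     \sum_(k <= l < n.+1)
        ('C(n, l.-1))%:R * (m%:R ^+ (n - l)) * Whitney m r l.-1 k.-1).
Proof.
(* The identities hold for m = 0 as well. *)
split; first exact: Whitney_cauchy_sum.
split; [exact: Whitney_subr_sum | exact: Whitney_natrM_sum].
Qed.
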